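(* Let $s\in\mathbb{T}$ and let $C_s$ denote the surface $C_{\underline t}$ for any $\underline t\in\theta^{-1}(s)$. A point $\chi\in C_s$ is a singular point of $C_s$ if and only if there exist $w\in W$ and $\underline t'\in\theta^{-1}(w(s))$ such that the character of $Z(H(\underline t';1))$ corresponding to $\chi$ extends to a one-dimensional representation of $H(\underline t';1)$.
   Context: $H(k_0,k_1,u_0,u_1;1)$ is the $\mathbb{C}$-algebra generated by $V_0,V_1,V_0^\vee,V_1^\vee$ with relations $(V_0-k_0)(V_0+k_0^{-1})=0$, $(V_1-k_1)(V_1+k_1^{-1})=0$, $(V_0^\vee-u_0)(V_0^\vee+u_0^{-1})=0$, $(V_1^\vee-u_1)(V_1^\vee+u_1^{-1})=0$, $V_1^\vee V_1V_0V_0^\vee=1$. Its center is $\mathbb{C}[X_1,X_2,X_3]/(R_{\underline t})$ with $X_1=V_1^\vee V_1+V_0V_0^\vee$, $X_2=V_1V_0+V_0^\vee V_1^\vee$, $X_3=V_1V_0^\vee+(V_0^\vee)^{-1}V_1^{-1}$, and $R_{\underline t}=X_1X_2X_3-X_1^2-X_2^2-X_3^2+p_1X_1+p_2X_2+p_3X_3+p_0+4$ with $\bar k_i=k_i-k_i^{-1}$, $\bar u_i=u_i-u_i^{-1}$, $p_1=\bar u_0\bar k_0+\bar k_1\bar u_1$, $p_2=\bar u_1\bar u_0+\bar k_0\bar k_1$, $p_3=\bar k_0\bar u_1+\bar k_1\bar u_0$, $p_0=\bar k_0^2+\bar k_1^2+\bar u_0^2+\bar u_1^2-\bar k_0\bar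 k_1\bar u_0\bar u_1$; $C_{\underline t}=\{R_{\underline t}=0\}\subset\mathbb{C}^3$, and a point $\chi=(\chi_1,\chi_2,\chi_3)\in C_{\underline t}$ is identified with the character $X_i\mapsto\chi_i$ of the center. Let $\mathbb{T}=\mathrm{Spec}\,\mathbb{C}[P]$, $P$ the weight lattice of $D_4$, with coordinates $s_1,\dots,s_4,\delta$ satisfying $s_1s_2s_3s_4=\delta^2$, acted on by the Weyl group $W=W(D_4)$. Writing $\underline t=(t_1,t_2,t_3,t_4)=(k_0,k_1,u_0,u_1)$, define $\theta:(\mathbb{C}^* )^4\to\mathbb{T}$ by $s_1=t_1t_2$, $s_2=-t_1/t_2$, $s_3=-t_3/t_4$, $s_4=t_3t_4$, $\delta=t_1t_3$. The coefficient vector $(p_0,p_1,p_2,p_3)$ of $R_{\underline t}$ depends only on the $W$-orbit of $\theta(\underline t)$, so $C_s$ is well defined and equals $C_{\underline t'}$ for all $\underline t'\in\theta^{-1}(w(s))$, $w\in W$. *)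

(* The base field C of the paper is modelled as R[i] for an
   arbitrary real closed field R; the definitions below are
   stated over an arbitrary field F. *)
From HB Require Import structures.
From mathcomp Require Import all_boot all_order all_algebra all_fingroup.
From mathcomp Require Import complex.
From mathcomp Require Import mpoly.

Set Implicit Arguments.
Unset Strict Implicit.
Unset Printing Implicit Defensive.
Import Order.TTheory GRing.Theory Num.Theory.
Local Open Scope ring_scope.

Section DAHA.
Variable F : fieldType.

Definition bar (x : F) : F := x - x^-1.

Definition pc1 (k0 k1 u0 u1 : F) : F := bar u0 * bar k0 + bar k1 * bar u1.
Definition pc2 (k0 k1 u0 u1 : F) : F := bar u1 * bar u0 + bar k0 * bar k1.
Definition pc3 (k0 k1 u0 u1 : F) : F := bar k0 * bar u1 + bar k1 * bar u0.
Definition pc0 (k0 k1 u0 u1 : F) : F :=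
  bar k0 ^+ 2 + bar k1 ^+ 2 + bar u0 ^+ 2 + bar u1 ^+ 2
  - bar k0 * bar k1 * bar u0 * bar u1.

(* The polynomial R_t in C[X_1, X_2, X_3]; variable X_{i+1} is 'X_i. *)
Definition Rpoly (k0 k1 u0 u1 : F) : {mpoly F[3]} :=
  'X_0 * 'X_1 * 'X_2 - 'X_0 ^+ 2 - 'X_1 ^+ 2 - 'X_2 ^+ 2
  + pc1 k0 k1 u0 u1 *: 'X_0 + pc2 k0 k1 u0 u1 *: 'X_1
  + pc3 k0 k1 u0 u1 *: 'X_2 + (pc0 k0 k1 u0 u1 + 4)%:MP.

Definition on_surface (k0 k1 u0 u1 : F) (chi : 'I_3 -> F) : Prop :=
  (Rpoly k0 k1 u0 u1).@[chi] = 0.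

Definition singular_point (k0 k1 u0 u1 : F) (chi : 'I_3 -> F) : Prop :=
  (Rpoly k0 k1 u0 u1).@[chi] = 0 /\
  forall i : 'I_3, ((Rpoly k0 k1 u0 u1)^`M(i)).@[chi] = 0.

(* A one-dimensional representation of H(k0,k1,u0,u1;1) is (by the universal
   property of an algebra given by generators and relations) the same as an
   assignment of scalars v0, v1, w0, w1 to V_0, V_1, V_0^vee, V_1^vee
   satisfying the defining relations.  [extends_1dim t chi] says that some
   such representation restricts on the center C[X_1,X_2,X_3]/(R_t) to the
   character X_i |-> chi_i. *)
Definition onedim_rep (k0 k1 u0 u1 v0 v1 w0 w1 : F) : Prop :=
  [/\ (v0 - k0) * (v0 + k0^-1) = 0, (v1 - k1) * (v1 + k1^-1) = 0,
      (w0 - u0) * (w0 + u0^-1) = 0, (w1 - u1) * (w1 + u1^-1) = 0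
    & w1 * v1 * v0 * w0 = 1].

Definition extends_1dim (k0 k1 u0 u1 : F) (chi : 'I_3 -> F) : Prop :=
  exists v0 v1 w0 w1 : F,
    [/\ onedim_rep k0 k1 u0 u1 v0 v1 w0 w1,
        w1 * v1 + v0 * w0 = chi 0,
        v1 * v0 + w0 * w1 = chi 1
      & v1 * w0 + w0^-1 * v1^-1 = chi 2].

(* Points of the torus T = Spec C[P]: coordinates (s_1..s_4, delta), all
   nonzero, with s_1 s_2 s_3 s_4 = delta^2.  s_{i+1} is s i. *)
Definition in_T (s : {ffun 'I_4 -> F}) (d : F) : Prop :=
  (forall i, s i != 0) /\ d != 0 /\ \prod_i s i = d ^+ 2.

Definition theta_s (k0 k1 u0 u1 : F) : {ffun 'I_4 -> F} :=
  [ffun i : 'I_4 => tnth [tuple k0 * k1; - (k0 / k1); - (u0 / u1); u0 * u1] i].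
Definition theta_d (k0 k1 u0 u1 : F) : F := k0 * u0.

(* The Weyl group W(D_4) = S_4 |x (Z/2)^3 acting on T: an element is a
   permutation p of the four coordinates together with an even subset S of
   coordinates whose sign is flipped (eps_j -> -eps_j for j in S).  On
   characters: s_j -> s_j^{-1} for j in S, delta -> delta * prod_{j in S}
   s_j^{-1} (as (eps_1+..+eps_4)/2 -> (eps_1+..+eps_4)/2 - sum_{j in S} eps_j),
   followed by the permutation of the s_j. *)
Definition W_elt (p : 'S_4) (S : {set 'I_4}) : Prop := ~~ odd #|S|.

Definition Wact_s (p : 'S_4) (S : {set 'I_4}) (s : {ffun 'I_4 -> F})
    : {ffun 'I_4 -> F} :=
  [ffun i => let j := (p^-1)%g i in if j \in S then (s j)^-1 else s j].
Definition Wact_d (p : 'S_4) (S : {set 'I_4}) (s : {ffun 'I_4 -> F}) (d : F)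
    : F :=
  d * \prod_(j in S) (s j)^-1.

End DAHA.

(* The partial derivatives of R_t are affine in p_1, p_2, p_3, so at a
   singular point chi they determine p_1, p_2, p_3, and then R_t(chi) = 0
   determines p_0: chi is singular iff p(t) is a fixed polynomial function of
   chi.  A one-dimensional representation of H(t') sends each generator to k
   or -k^-1 for its parameter k, hence only sees the values bar k, and a
   direct computation shows that p(t') is that same function of its central
   character chi; moreover every chi arises for some t' (let the generators
   act by their own parameters).  So chi is singular on C_t iff p(t) = p(t')
   for some t' above which chi extends.  Finally p(t) = p(t') iff theta(t)
   and theta(t') are W-conjugate: p_2, 2 p_0 + 16 + p_2^2 and p_1 -+ p_3 are
   W-invariant functions of (s, delta), and they separate W-orbits because
   they determine the multiset of the s_i + s_i^-1, after which the signs
   are fixed by the spin invariants. *)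

From HB Require Import structures.
From mathcomp Require Import all_boot all_order all_algebra all_fingroup.
From mathcomp Require Import complex mpoly ring.

Set Implicit Arguments.
Unset Strict Implicit.
Unset Printing Implicit Defensive.
Import GRing.Theory Num.Theory.
Local Open Scope ring_scope.

Lemma mderivXU (R : nzRingType) n (i j : 'I_n) :
  ('X_j : {mpoly R[n]})^`M(i) = ((j == i)%:R)%:MP.
Proof.
rewrite mderivX mnm1E; case: eqP => [->|_]; last by rewrite scale0r mpolyC0.
have -> : (U_(i) - U_(i))%MM = 0%MM by apply/mnmP => k; rewrite mnmBE subnn mnm0E.
by rewrite mpolyX0 scale1r mpolyC1.
Qed.

Lemma perm_of_prod_XsubC (R : fieldType) n (x y : 'I_n -> R) :
  \prod_i ('X - (x i)%:P) = \prod_i ('X - (y i)%:P) ->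
  exists p : 'S_n, forall i, y i = x (p i).
Proof.
move=> E; have /tuple_permP[p yxp] : perm_eq (mktuple y) (mktuple x).
  apply: prod_XsubC_eq; rewrite !big_tuple.
  by under eq_bigr do rewrite tnth_mktuple; under [RHS]eq_bigr do rewrite tnth_mktuple.
exists p => i; move: yxp => /(congr1 (nth 0 ^~ i)).
by rewrite -!tnth_nth !tnth_mktuple.
Qed.

Lemma prod_XsubC4_eq (R : fieldType) (x y : 'I_4 -> R) : (2 : R) != 0 ->
  \sum_i x i = \sum_i y i -> \sum_i x i ^+ 2 = \sum_i y i ^+ 2 ->
  \prod_i (x i + 2) = \prod_i (y i + 2) -> \prod_i (x i - 2) = \prod_i (y i - 2) ->
  \prod_i ('X - (x i)%:P) = \prod_i ('X - (y i)%:P).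
Proof.
move=> two; rewrite !big_ord_recl !big_ord0 !addr0 !mulr1.
move: (x _) (x _) (x _) (x _) (y _) (y _) (y _) (y _) => a b c d a' b' c' d'.
move=> s1 s2 sp sm.
have expand (u v w z : R) : ('X - u%:P) * (('X - v%:P) * (('X - w%:P) * ('X - z%:P))) =
    'X^4 - (u + (v + (w + z)))%:P * 'X^3
    + (u * v + u * w + u * z + v * w + v * z + w * z)%:P * 'X^2
    - (u * v * w + u * v * z + u * w * z + v * w * z)%:P * 'X
    + (u * v * w * z)%:P.
  by rewrite !(rmorphD, rmorphM) /=; ring.
have e2E (u v w z : R) : u * v + u * w + u * z + v * w + v * z + w * z =
    ((u + (v + (w + z))) ^+ 2 - (u ^+ 2 + (v ^+ 2 + (w ^+ 2 + z ^+ 2)))) / 2.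
  by field; exact two.
have e3E (u v w z : R) : u * v * w + u * v * z + u * w * z + v * w * z =
    ((u + 2) * ((v + 2) * ((w + 2) * (z + 2)))
     - (u - 2) * ((v - 2) * ((w - 2) * (z - 2))) - 16 * (u + (v + (w + z)))) / 2 / 2.
  by field; exact two.
have e4E (u v w z : R) : u * v * w * z =
    ((u + 2) * ((v + 2) * ((w + 2) * (z + 2)))
     + (u - 2) * ((v - 2) * ((w - 2) * (z - 2)))) / 2
    - 4 * (u * v + u * w + u * z + v * w + v * z + w * z) - 16.
  by field; exact two.
by rewrite !expand !e3E !e4E !e2E s1 s2 sp sm.
Qed.

Section Surface.
Variable F : fieldType.
Variables (k0 k1 u0 u1 : F) (chi : 'I_3 -> F).

Definition pcoef : F * F * F * F :=
  (pc0 k0 k1 u0 u1, pc1 k0 k1 u0 u1, pc2 k0 k1 u0 u1, pc3 k0 k1 u0 u1).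

Definition sing_coef : F * F * F * F :=
  (2 * (chi 0 * chi 1 * chi 2) - (chi 0 ^+ 2 + chi 1 ^+ 2 + chi 2 ^+ 2) - 4,
   2 * chi 0 - chi 1 * chi 2, 2 * chi 1 - chi 0 * chi 2,
   2 * chi 2 - chi 0 * chi 1).

Lemma meval_Rpoly : (Rpoly k0 k1 u0 u1).@[chi] =
  chi 0 * chi 1 * chi 2 - chi 0 ^+ 2 - chi 1 ^+ 2 - chi 2 ^+ 2
  + pc1 k0 k1 u0 u1 * chi 0 + pc2 k0 k1 u0 u1 * chi 1
  + pc3 k0 k1 u0 u1 * chi 2 + (pc0 k0 k1 u0 u1 + 4).
Proof. by rewrite /Rpoly !expr2 !(mevalD, mevalB, mevalN, mevalM, mevalZ, mevalC, mevalXU). Qed.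

Lemma meval_mderiv_Rpoly (i : 'I_3) :
  let e j := ((j == i)%:R : F) in
  ((Rpoly k0 k1 u0 u1)^`M(i)).@[chi] =
  (e 0 * chi 1 + chi 0 * e 1) * chi 2 + chi 0 * chi 1 * e 2
  - 2 * (e 0 * chi 0 + e 1 * chi 1 + e 2 * chi 2)
  + pc1 k0 k1 u0 u1 * e 0 + pc2 k0 k1 u0 u1 * e 1 + pc3 k0 k1 u0 u1 * e 2.
Proof.
rewrite /= /Rpoly !expr2 !(mderivD, mderivB, mderivN, mderivM, mderivZ, mderivC, mderivXU).
rewrite !(mevalD, mevalB, mevalN, mevalM, mevalZ, mevalC, mevalXU) /=; ring.
Qed.

Lemma singular_pointE : singular_point k0 k1 u0 u1 chi <-> pcoef = sing_coef.
Proof.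
rewrite /singular_point meval_Rpoly; split=> [[R0 dR] | [e0 e1 e2 e3]].
  move: (dR 0) (dR 1) (dR 2); rewrite !meval_mderiv_Rpoly /= => dR0 dR1 dR2.
  have e1 : pc1 k0 k1 u0 u1 = 2 * chi 0 - chi 1 * chi 2.
    by apply: subr0_eq; apply: etrans dR0; ring.
  have e2 : pc2 k0 k1 u0 u1 = 2 * chi 1 - chi 0 * chi 2.
    by apply: subr0_eq; apply: etrans dR1; ring.
  have e3 : pc3 k0 k1 u0 u1 = 2 * chi 2 - chi 0 * chi 1.
    by apply: subr0_eq; apply: etrans dR2; ring.
  rewrite /pcoef e1 e2 e3 in R0 *; congr (_, _, _, _).
  by apply: subr0_eq; apply: etrans R0; ring.
split=> [|i]; first by rewrite e0 e1 e2 e3; ring.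
by rewrite meval_mderiv_Rpoly e1 e2 e3; case: i => [[|[|[|//]]] _] /=; ring.
Qed.

End Surface.

Section OneDimensional.
Variable F : fieldType.

Lemma bar_hecke_root (v k : F) : (v - k) * (v + k^-1) = 0 -> bar v = bar k.
Proof.
move/eqP; rewrite mulf_eq0 subr_eq0 addr_eq0 => /orP[]/eqP -> //.
by rewrite /bar invrN invrK opprK addrC.
Qed.

Lemma pcoef_extends_1dim (k0 k1 u0 u1 : F) (chi : 'I_3 -> F) :
  extends_1dim k0 k1 u0 u1 chi -> pcoef k0 k1 u0 u1 = sing_coef chi.
Proof.
rewrite /sing_coef => -[v0 [v1 [w0 [w1 [[hv0 hv1 hw0 hw1 hrel] <- <- <-]]]]].
rewrite /pcoef /pc0 /pc1 /pc2 /pc3 -(bar_hecke_root hv0) -(bar_hecke_root hv1).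
rewrite -(bar_hecke_root hw0) -(bar_hecke_root hw1) /bar.
have : w1 * v1 * v0 * w0 != 0 by rewrite hrel oner_eq0.
rewrite !mulf_eq0 !negb_or => /andP[/andP[/andP[_ nv1] nv0] nw0].
have -> : w1 = (v1 * v0 * w0)^-1 by apply/esym/mulr1_eq; rewrite -hrel; ring.
by congr (_, _, _, _); field; rewrite ?nv0 ?nv1 ?nw0 ?oner_neq0.
Qed.

End OneDimensional.

Section WeylInvariants.
Variable F : fieldType.
Implicit Types (s : {ffun 'I_4 -> F}) (d : F) (p : 'S_4) (S : {set 'I_4}).

Definition addV (a : F) := a + a^-1.

(* Expanding the products, spin_sum and spin_diff are the sum and the
   difference of the characters of the two half-spin representations of D_4,
   while the first component of Winv is the character of the vector
   representation. *)
Definition spin_sum s d := d * \prod_i (1 + (s i)^-1).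
Definition spin_diff s d := d * \prod_i (1 - (s i)^-1).

Definition Winv s d : F * F * F * F :=
  (\sum_i addV (s i), \sum_i addV (s i) ^+ 2, spin_sum s d, spin_diff s d).

Definition Winv_of_pcoef (q : F * F * F * F) : F * F * F * F :=
  let: (q0, q1, q2, q3) := q in (q2, 2 * q0 + 16 + q2 ^+ 2, q1 - q3, q1 + q3).

Lemma Winv_of_pcoef_inj : (2 : F) != 0 -> injective Winv_of_pcoef.
Proof.
move=> two [[[q0 q1] q2] q3] [[[r0 r1] r2] r3] [<- e0 e13m e13p].
have e1 : q1 = r1.
  apply: (mulfI two); transitivity ((q1 - q3) + (q1 + q3)); first by ring.
  by rewrite e13m e13p; ring.
have e3 : q3 = r3 by move: e13p; rewrite e1 => /addrI.
by move: e0 => /addIr /addIr /(mulfI two) ->; rewrite e1 e3.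
Qed.

Section Theta.
Variables k0 k1 u0 u1 : F.
Hypotheses (nk0 : k0 != 0) (nk1 : k1 != 0) (nu0 : u0 != 0) (nu1 : u1 != 0).

Lemma theta_in_T : in_T (theta_s k0 k1 u0 u1) (theta_d k0 k1 u0 u1).
Proof.
split=> [i|]; first rewrite ffunE (tnth_nth 0).
  by case: i => [[|[|[|[|//]]]] _] /=; rewrite ?oppr_eq0 ?mulf_neq0 ?invr_eq0.
split; first exact: mulf_neq0.
rewrite !big_ord_recl big_ord0 !ffunE !(tnth_nth 0) /= /theta_d.
by field; rewrite nk1 nu1.
Qed.

Lemma Winv_theta :
  Winv (theta_s k0 k1 u0 u1) (theta_d k0 k1 u0 u1) = Winv_of_pcoef (pcoef k0 k1 u0 u1).
Proof.
rewrite /Winv /spin_sum /spin_diff /addV /theta_d /pcoef /pc0 /pc1 /pc2 /pc3 /bar /=.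
rewrite !big_ord_recl !big_ord0 !ffunE !(tnth_nth 0) /=.
by congr (_, _, _, _); field; rewrite !oppr_eq0 nk0 nk1 nu0 nu1.
Qed.

End Theta.

Lemma addVV (a : F) : addV a^-1 = addV a.
Proof. by rewrite /addV invrK addrC. Qed.

Lemma big_Wact_s (R : Type) (idx : R) (op : Monoid.com_law idx) (G : F -> R) p S s :
  \big[op/idx]_i G (Wact_s p S s i) =
  \big[op/idx]_j G (if j \in S then (s j)^-1 else s j).
Proof.
by rewrite (reindex_inj (@perm_inj _ p)); apply: eq_bigr => j _; rewrite ffunE permK.
Qed.

Lemma in_T_Wact p S s d : in_T s d -> in_T (Wact_s p S s) (Wact_d p S s d).
Proof.
move=> [nz [nd hd]]; split=> [i|]; first by rewrite ffunE /=; case: ifP; rewrite ?invr_eq0.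
split; first by rewrite mulf_neq0 //; apply/prodf_neq0 => j _; rewrite invr_eq0.
rewrite (big_Wact_s _ id) /Wact_d exprMn -hd expr2 -big_split /=.
rewrite [X in _ * X]big_mkcond -big_split /=; apply: eq_bigr => j _.
by case: ifP => _; rewrite ?mulr1 //; field; rewrite nz.
Qed.

Lemma spin_sum_Wact p S s d : (forall i, s i != 0) ->
  spin_sum (Wact_s p S s) (Wact_d p S s d) = spin_sum s d.
Proof.
move=> nz; rewrite /spin_sum /Wact_d (big_Wact_s _ (fun a => 1 + a^-1)) -mulrA.
congr (_ * _); rewrite big_mkcond -big_split /=; apply: eq_bigr => j _.
by case: ifP => _; rewrite ?mul1r // invrK mulrDr mulr1 mulVf // addrC.
Qed.

Lemma spin_diff_Wact p S s d : (forall i, s i != 0) ->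
  spin_diff (Wact_s p S s) (Wact_d p S s d) = (-1) ^+ #|S| * spin_diff s d.
Proof.
move=> nz; rewrite /spin_diff /Wact_d (big_Wact_s _ (fun a => 1 - a^-1)) -mulrA.
rewrite [RHS]mulrCA -prodr_const; congr (_ * _).
rewrite big_mkcond [in RHS]big_mkcond -!big_split /=; apply: eq_bigr => j _.
by case: ifP => _; rewrite ?mul1r // invrK mulrBr mulr1 mulVf // mulN1r opprB.
Qed.

Lemma Winv_Wact p S s d : W_elt p S -> (forall i, s i != 0) ->
  Winv (Wact_s p S s) (Wact_d p S s d) = Winv s d.
Proof.
move=> even nz; rewrite /Winv spin_sum_Wact // spin_diff_Wact //.
rewrite -signr_odd (negbTE even) mul1r.
rewrite (big_Wact_s _ addV) (big_Wact_s _ (fun a => addV a ^+ 2)).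
by congr (_, _, _, _); apply: eq_bigr => j _; case: ifP; rewrite ?addVV.
Qed.

End WeylInvariants.

Section OrbitSeparation.
Variable F : fieldType.
Hypothesis two : (2 : F) != 0.
Implicit Types (s : {ffun 'I_4 -> F}) (d : F) (p : 'S_4) (S : {set 'I_4}).

Lemma self_opp_eq0 (a : F) : a = - a -> a = 0.
Proof. by move=> h; apply: (mulfI two); rewrite mulr0 mulr_natl mulr2n {2}h subrr. Qed.

Lemma addV_eq (a b : F) : a != 0 -> b != 0 -> addV a = addV b -> a = b \/ a = b^-1.
Proof.
move=> na nb e; have : (a - b) * (a - b^-1) = a * (addV a - addV b).
  by rewrite /addV; field; rewrite na nb.
by rewrite e subrr mulr0 => /eqP; rewrite mulf_eq0 !subr_eq0 => /orP[]/eqP; [left|right].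
Qed.

Lemma spin_sumN s d : spin_sum s (- d) = - spin_sum s d.
Proof. exact: mulNr. Qed.

Lemma spin_sum_sqr s d : in_T s d -> spin_sum s d ^+ 2 = \prod_i (addV (s i) + 2).
Proof.
move=> [nz [_ hd]]; rewrite /spin_sum exprMn -hd expr2 -!big_split /=.
by apply: eq_bigr => i _; rewrite /addV; field; rewrite nz.
Qed.

Lemma spin_diff_sqr s d : in_T s d -> spin_diff s d ^+ 2 = \prod_i (addV (s i) - 2).
Proof.
move=> [nz [_ hd]]; rewrite /spin_diff exprMn -hd expr2 -!big_split /=.
by apply: eq_bigr => i _; rewrite /addV; field; rewrite nz.
Qed.

Lemma spin_sum_eq0 s d : in_T s d -> spin_sum s d = 0 -> exists j, s j = -1.
Proof.
move=> [_ [nd _]] /eqP; rewrite mulf_eq0 (negbTE nd) => /prodf_eq0[j _].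
by rewrite addrC addr_eq0 => /eqP sj; exists j; rewrite -[s j]invrK sj invrN1.
Qed.

Lemma spin_diff_eq0 s d : in_T s d -> spin_diff s d = 0 -> exists j, s j = 1.
Proof.
move=> [_ [nd _]] /eqP; rewrite mulf_eq0 (negbTE nd) => /prodf_eq0[j _].
by rewrite subr_eq0 eq_sym invr_eq1 => /eqP sj; exists j.
Qed.

Definition toggle S j := if j \in S then S :\ j else j |: S.

Lemma odd_toggle S j : odd #|toggle S j| = ~~ odd #|S|.
Proof.
rewrite /toggle; case: ifP => jS; last by rewrite cardsU1 jS.
by rewrite [in RHS](cardsD1 j S) jS negbK.
Qed.

Lemma Wact_s_toggle p S s j : (s j)^-1 = s j -> Wact_s p (toggle S j) s = Wact_s p S s.
Proof.
move=> sjV; apply/ffunP => i; rewrite !ffunE /= /toggle.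
case: ((p^-1)%g i =P j) => [->|/eqP ne]; first by rewrite sjV !if_same.
by case: (j \in S); rewrite ?in_setD1 ?in_setU1 (negbTE ne).
Qed.

Lemma Wact_d_toggle p S s d j : s j != 0 -> (s j)^-1 = s j ->
  Wact_d p (toggle S j) s d = Wact_d p S s d * s j.
Proof.
move=> nz sjV; rewrite /Wact_d /toggle; case: ifP => jS.
  by rewrite (big_setD1 j jS) /= mulrCA -[RHS]mulrA [_ * s j]mulrC mulKf.
by rewrite big_setU1 ?jS //= sjV -mulrA [s j * _]mulrC mulrA.
Qed.

Section FixedBase.
Variables (s : {ffun 'I_4 -> F}) (d : F).
Hypothesis Ts : in_T s d.

Lemma Wact_fix_parity p S s' d' : s' = Wact_s p S s -> d' = Wact_d p S s d ->
  spin_diff s d = spin_diff s' d' ->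
  exists S', [/\ W_elt p S', s' = Wact_s p S' s & d' = Wact_d p S' s d].
Proof.
move=> -> -> em; have [nz _] := Ts.
case odS: (odd #|S|); last by exists S; rewrite /W_elt odS.
have /(spin_diff_eq0 Ts)[j sj] : spin_diff s d = 0.
  by apply: self_opp_eq0; rewrite [LHS]em spin_diff_Wact // -signr_odd odS mulN1r.
have sjV : (s j)^-1 = s j by rewrite sj invr1.
exists (toggle S j); rewrite /W_elt odd_toggle odS Wact_s_toggle //.
by rewrite Wact_d_toggle ?nz // sj mulr1.
Qed.

Lemma Wact_fix_sign p S s' d' : s' = Wact_s p S s -> d' = - Wact_d p S s d ->
  spin_sum s d = spin_sum s' d' ->
  exists S', s' = Wact_s p S' s /\ d' = Wact_d p S' s d.
Proof.
move=> -> -> ep; have [nz _] := Ts.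
have /(spin_sum_eq0 Ts)[j sj] : spin_sum s d = 0.
  by apply: self_opp_eq0; rewrite [LHS]ep spin_sumN spin_sum_Wact.
have sjV : (s j)^-1 = s j by rewrite sj invrN1.
exists (toggle S j); rewrite Wact_s_toggle //.
by rewrite Wact_d_toggle ?nz // sj mulrN1.
Qed.

Lemma Wact_up_to_sign p s' d' : in_T s' d' ->
  (forall i, addV (s' i) = addV (s ((p^-1)%g i))) ->
  exists S, s' = Wact_s p S s /\ (d' = Wact_d p S s d \/ d' = - Wact_d p S s d).
Proof.
move=> [nz' [_ hd']] hp; have [nz _] := Ts.
pose S := [set j | s' (p j) != s j].
have hs : s' = Wact_s p S s.
  apply/ffunP => i; rewrite ffunE /= inE permKV.
  case: eqP => [//|ne] /=.
  by case: (addV_eq (nz' i) (nz _) (hp i)).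
exists S; split=> //.
have [_ [_ hW]] := in_T_Wact p S Ts.
have : (d' == Wact_d p S s d) || (d' == - Wact_d p S s d).
  by rewrite -eqf_sqr -hd' -hW -hs.
by case/orP=> /eqP; [left | right].
Qed.

End FixedBase.

Lemma Winv_inj s d s' d' : in_T s d -> in_T s' d' -> Winv s d = Winv s' d' ->
  exists p S, [/\ W_elt p S, s' = Wact_s p S s & d' = Wact_d p S s d].
Proof.
move=> Ts Ts' [e1 e2 ep em].
have sp : \prod_i (addV (s i) + 2) = \prod_i (addV (s' i) + 2).
  by rewrite -(spin_sum_sqr Ts) -(spin_sum_sqr Ts') ep.
have sm : \prod_i (addV (s i) - 2) = \prod_i (addV (s' i) - 2).
  by rewrite -(spin_diff_sqr Ts) -(spin_diff_sqr Ts') em.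
have [q hq] := perm_of_prod_XsubC (prod_XsubC4_eq two e1 e2 sp sm).
have hq' i : addV (s' i) = addV (s (((q^-1)^-1)%g i)) by rewrite invgK.
exists q^-1%g; have [S [hs [hd | hd]]] := Wact_up_to_sign Ts Ts' hq'.
  exact: Wact_fix_parity hs hd em.
have [S' [hs' hd']] := Wact_fix_sign Ts hs hd ep.
exact: Wact_fix_parity hs' hd' em.
Qed.

End OrbitSeparation.

Section Existence.
Variable C : numClosedFieldType.

Lemma addV_surj (c : C) : exists2 a : C, a != 0 & addV a = c.
Proof.
pose r := sqrtC (c ^+ 2 - 4).
have ab : (c + r) / 2 * ((c - r) / 2) = 1.
  rewrite (_ : _ * _ = (c ^+ 2 - r ^+ 2) / 4); last by field.
  by rewrite sqrtCK; field.
exists ((c + r) / 2); last by rewrite /addV (mulr1_eq ab); field.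
by rewrite -unitfE; apply/unitrPr; exists ((c - r) / 2).
Qed.

(* Let the generators act by their own Hecke parameters: with w1 v1 = a,
   v1 v0 = b, v1 w0 = c, the relation w1 v1 v0 w0 = 1 forces v1 ^+ 2 = a b c. *)
Lemma extends_1dim_exists (chi : 'I_3 -> C) :
  exists k0 k1 u0 u1 : C,
    [/\ k0 != 0, k1 != 0, u0 != 0 & u1 != 0] /\ extends_1dim k0 k1 u0 u1 chi.
Proof.
rewrite /extends_1dim; have [a na <-] := addV_surj (chi 0).
have [b nb <-] := addV_surj (chi 1).
have [c nc <-] := addV_surj (chi 2); rewrite /addV.
pose v1 := sqrtC (a * b * c).
have v1_sqr : v1 ^+ 2 = a * b * c by rewrite sqrtCK.
have nv1 : v1 != 0.
  by apply: contraNneq (mulf_neq0 (mulf_neq0 na nb) nc) => v0; rewrite -v1_sqr v0 expr0n.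
have -> : a = v1 ^+ 2 / (b * c) by rewrite v1_sqr; field; rewrite nb nc.
exists (b / v1), v1, (c / v1), (v1 ^+ 2 / (b * c) / v1).
split; first by split; rewrite ?(mulf_neq0, invr_eq0, expf_neq0).
exists (b / v1), v1, (c / v1), (v1 ^+ 2 / (b * c) / v1).
by split; [split; rewrite ?subrr ?mul0r // | ..]; field; rewrite ?nb ?nc ?nv1.
Qed.

End Existence.

Theorem proposition3p5 (R : rcfType)
    (s : {ffun 'I_4 -> R[i]}) (d : R[i]) (hs : in_T s d)
    (k0 k1 u0 u1 : R[i])
    (hk0 : k0 != 0) (hk1 : k1 != 0) (hu0 : u0 != 0) (hu1 : u1 != 0)
    (ht : theta_s k0 k1 u0 u1 = s /\ theta_d k0 k1 u0 u1 = d)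
    (chi : 'I_3 -> R[i]) (hchi : on_surface k0 k1 u0 u1 chi) :
  singular_point k0 k1 u0 u1 chi <->
  exists (p : 'S_4) (S : {set 'I_4}), W_elt p S /\
    exists k0' k1' u0' u1' : R[i],
      [/\ k0' != 0, k1' != 0, u0' != 0 & u1' != 0] /\
      [/\ theta_s k0' k1' u0' u1' = Wact_s p S s,
          theta_d k0' k1' u0' u1' = Wact_d p S s d
        & extends_1dim k0' k1' u0' u1' chi].
Proof.
have two : (2 : R[i]) != 0 by rewrite pnatr_eq0.
case: ht => hs0 hd0; subst s d; rewrite singular_pointE.
split=> [sing | [p [S [even [k0' [k1' [u0' [u1' [[nk0' nk1' nu0' nu1'] [hs' hd' ext]]]]]]]]]].
  have [k0' [k1' [u0' [u1' [[nk0' nk1' nu0' nu1'] ext]]]]] := extends_1dim_exists chi.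
  have [|p [S [even hs' hd']]] := Winv_inj two hs (theta_in_T nk0' nk1' nu0' nu1').
    by rewrite !Winv_theta // sing (pcoef_extends_1dim ext).
  by exists p, S; split=> //; exists k0', k1', u0', u1'.
rewrite -(pcoef_extends_1dim ext); apply: (Winv_of_pcoef_inj two).
by rewrite -!Winv_theta // hs' hd' Winv_Wact //; case: hs.
Qed.
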